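(* Let $q$ be an odd prime power, $a\in\mathbb{F}_q^*$ a non-square, $\beta\in\mathbb{F}_{q^2}$ with $\beta^2=a$, and for $c\in\mathbb{F}_q^*$ let $f_c(X)=X(X^{q-1}-c)^{q+1}$ as a map $\mathbb{F}_{q^2}\to\mathbb{F}_{q^2}$. Then the map $\varphi:\mathbb{F}_{q^2}\to\mathbb{F}_{q^2}$, $\varphi(x+y\beta)=y+x\beta^{-1}$ ($x,y\in\mathbb{F}_q$), is a bijection satisfying $\varphi\circ f_c=f_{-c}\circ\varphi$; consequently the functional graphs $\mathcal{G}(f_c)$ and $\mathcal{G}(f_{-c})$ are isomorphic.
   Context: The functional graph $\mathcal{G}(f)$ of $f:\mathbb{F}_{q^2}\to\mathbb{F}_{q^2}$ is the directed graph with vertex set $\mathbb{F}_{q^2}$ and edges $\langle x,f(x)\rangle$. *)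

From HB Require Import structures.
From mathcomp Require Import all_boot all_order all_algebra all_field.
Set Implicit Arguments. Unset Strict Implicit. Unset Printing Implicit Defensive.
Import GRing.Theory.
Local Open Scope ring_scope.

Definition fc (F : finFieldType) (L : fieldType) (iota : {rmorphism F -> L})
  (c : F) (x : L) : L :=
  x * (x ^+ (#|F|.-1) - iota c) ^+ (#|F|.+1).

Definition fgraph_edge (T : eqType) (f : T -> T) : rel T := fun x y => y == f x.

Definition digraph_iso (T : Type) (e1 e2 : T -> T -> bool) : Prop :=
  exists h : T -> T, bijective h /\ forall x y, e1 x y = e2 (h x) (h y).

Definition fgraph_isomorphic (T : eqType) (f g : T -> T) : Prop :=
  digraph_iso (fgraph_edge f) (fgraph_edge g).

(* Since [a] is a non-square in F_q, [beta] lies outside F_q, the fixed field of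
   the q-power Frobenius, which therefore sends [beta] to its other square root
   [-beta]; hence [beta^(q-1) = -1] and [phi] is multiplication by [beta^-1].
   Scaling z by u with [u^(q-1) = -1] negates [z^(q-1)], so it turns
   [(z^(q-1) - c)^(q+1)] into [(-(z^(q-1) - c))^(q+1)], with the sign lost since
   q + 1 is even: [f_(-c)(z u) = f_c(z) u]. *)

From HB Require Import structures.
From mathcomp Require Import all_boot all_order all_algebra all_field.
Import GRing.Theory.
Local Open Scope ring_scope.

Lemma fgraph_isomorphic_conj (T : eqType) (f g h : T -> T) :
  bijective h -> h \o f =1 g \o h -> fgraph_isomorphic f g.
Proof.
move=> hbij hfg; exists h; split=> // x y.
rewrite /fgraph_edge -[g (h x)]hfg /=.
by apply/eqP/eqP => [-> // | /(bij_inj hbij)].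
Qed.

Lemma fc_opp_mul (F : finFieldType) (L : fieldType) (iota : {rmorphism F -> L})
    (c : F) (u z : L) :
  odd #|F| -> u ^+ #|F|.-1 = -1 -> fc iota (- c) (z * u) = fc iota c z * u.
Proof.
move=> q_odd u_pred; rewrite /fc exprMn u_pred mulrN1 rmorphN -opprD exprNn.
by rewrite -signr_odd /= q_odd expr0 mul1r mulrAC.
Qed.

Section QuadraticExtension.
Local Set Implicit Arguments.
Local Unset Strict Implicit.
Variables (F L : finFieldType) (iota : {rmorphism F -> L}).

Lemma fixed_by_expcard_in_image (z : L) :
  z ^+ #|F| = z -> exists b : F, z = iota b.
Proof.
move=> zqz; pose P := map_poly iota ('X^#|F| - 'X).
have : root P z.
  by rewrite /P rmorphB /= map_polyXn map_polyX rootE !hornerE zqz subrr.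
have -> : P = \prod_(w <- [seq iota b | b : F]) ('X - w%:P).
  rewrite /P finField_genPoly rmorph_prod big_image /=.
  by apply: eq_bigr => b _; rewrite rmorphB /= map_polyX map_polyC.
by rewrite root_prod_XsubC => /mapP[b _ ->]; exists b.
Qed.

Variables (a : F) (beta : L).
Hypotheses (a_nonsquare : ~ exists b : F, b ^+ 2 = a) (beta_sqr : beta ^+ 2 = iota a).

Lemma sqrt_nonsquare_notin_image (b : F) : beta != iota b.
Proof.
apply/eqP => beta_b; apply: a_nonsquare; exists b.
by apply: (fmorph_inj iota); rewrite rmorphXn -beta_b.
Qed.

Lemma sqrt_nonsquare_neq0 : beta != 0.
Proof. by rewrite -(rmorph0 iota) sqrt_nonsquare_notin_image. Qed.

Lemma expcard_sqrt_nonsquare : beta ^+ #|F| = - beta.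
Proof.
have : (beta ^+ #|F|) ^+ 2 == beta ^+ 2.
  by rewrite -exprM mulnC exprM beta_sqr -rmorphXn expf_card.
rewrite eqf_sqr => /orP[/eqP /fixed_by_expcard_in_image [b beta_b] | /eqP //].
by have := sqrt_nonsquare_notin_image b; rewrite beta_b eqxx.
Qed.

Lemma inv_sqrt_nonsquare_exp_pred : beta^-1 ^+ #|F|.-1 = -1.
Proof.
have beta_pred : beta ^+ #|F|.-1 = -1.
  apply: (mulIf sqrt_nonsquare_neq0).
  rewrite -exprSr prednK ?expcard_sqrt_nonsquare ?mulN1r //.
  exact: ltnW (card_finNzRing_gt1 F).
by rewrite exprVn beta_pred invrN invr1.
Qed.

Lemma coord_eq0 (x y : F) : iota x + iota y * beta = 0 -> x = 0 /\ y = 0.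
Proof.
have [-> | y_neq0] := eqVneq y 0.
  by rewrite rmorph0 mul0r addr0 => /eqP; rewrite fmorph_eq0 => /eqP.
move=> /eqP; rewrite addrC addr_eq0 => /eqP yb_x.
have := sqrt_nonsquare_notin_image (- x / y).
by rewrite fmorph_div rmorphN -yb_x mulrAC divff ?mul1r ?fmorph_eq0 ?eqxx.
Qed.

Lemma coord_bij : #|L| = (#|F| ^ 2)%N ->
  bijective (fun p : F * F => iota p.1 + iota p.2 * beta).
Proof.
move=> cardL; have coord_inj : injective (fun p : F * F => iota p.1 + iota p.2 * beta).
  move=> [x y] [x' y'] /= /eqP; rewrite -subr_eq0 opprD addrACA -mulrBl -!rmorphB.
  by move=> /eqP /coord_eq0 [/eqP + /eqP]; rewrite !subr_eq0 => /eqP -> /eqP ->.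
have card_coord : #|L| = #|{: F * F}| by rewrite cardL card_prod expnS expn1.
have [g gK Kg] := inj_card_bij coord_inj (eq_leq card_coord).
by exists g.
Qed.

End QuadraticExtension.

Theorem mainTheorem4
  (F L : finFieldType) (iota : {rmorphism F -> L})
  (Hq : exists p k : nat, [/\ prime p, (0 < k)%N & #|F| = (p ^ k)%N])
  (Hodd : odd #|F|)
  (HL : #|L| = (#|F| ^ 2)%N)
  (a : F) (Ha0 : a != 0) (Hansq : ~ exists b : F, b ^+ 2 = a)
  (beta : L) (Hbeta : beta ^+ 2 = iota a)
  (c : F) (Hc : c != 0) :
  (exists phi : L -> L,
      forall x y : F, phi (iota x + iota y * beta) = iota y + iota x * beta^-1)
  /\ (forall phi : L -> L,
      (forall x y : F, phi (iota x + iota y * beta) = iota y + iota x * beta^-1) ->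
      bijective phi /\ phi \o fc iota c =1 fc iota (- c) \o phi)
  /\ fgraph_isomorphic (fc iota c) (fc iota (- c)).
Proof.
have beta_neq0 := sqrt_nonsquare_neq0 Hansq Hbeta.
pose phi0 z := z * beta^-1.
have phi0E x y : phi0 (iota x + iota y * beta) = iota y + iota x * beta^-1.
  by rewrite /phi0 mulrDl mulfK // addrC.
have phi0_bij : bijective phi0.
  by exists (fun z => z * beta) => z; rewrite /phi0 ?mulfVK ?mulfK.
have phi0_conj : phi0 \o fc iota c =1 fc iota (- c) \o phi0.
  by move=> z; rewrite /= /phi0 fc_opp_mul // (inv_sqrt_nonsquare_exp_pred Hansq Hbeta).
have [coord _ Kcoord] := coord_bij Hansq Hbeta HL.
have phi_eq_phi0 phi : (forall x y, phi (iota x + iota y * beta) = iota y + iota x * beta^-1) ->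
    phi =1 phi0.
  by move=> phiE z; rewrite -[z]Kcoord phiE phi0E.
split; first by exists phi0.
split; last exact: fgraph_isomorphic_conj phi0_bij phi0_conj.
move=> phi /phi_eq_phi0 phiE; split; first exact: (eq_bij phi0_bij (fsym phiE)).
by move=> z /=; rewrite !phiE; exact: phi0_conj.
Qed.
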